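(* Let $\mathbb{R}$ be an EZ-category and $\phi:X\to Y$ a map of set-valued presheaves on $\mathbb{R}$. The following are equivalent: (i) for each object $r$ of $\mathbb{R}$, the relative latching map $X_r\cup_{L_r(X)}L_r(Y)\to Y_r$ is a free $\mathrm{Aut}(r)$-extension; (ii) $\phi$ is a monomorphism, and for each object $r$ and each non-degenerate element $y\in Y_r\setminus\phi(X)_r$, the isotropy group $\{g\in\mathrm{Aut}(r)\mid g^*(y)=y\}$ is trivial; (iii) for each $n\ge0$, the relative $n$-skeleton $\mathit{sk}_n(\phi)=X\cup_{\mathit{sk}_n(X)}\mathit{sk}_n(Y)$ is obtained from the relative $(n-1)$-skeleton $\mathit{sk}_{n-1}(\phi)$ by attaching (i.e. by a pushout along) a coproduct of boundary inclusions $\partial\mathbb{R}[r]\hookrightarrow\mathbb{R}[r]$ of representable presheaves with $d(r)=n$.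
   Context: An EZ-category is a small category $\mathbb{R}$ with a degree function $d:\mathrm{Ob}(\mathbb{R})\to\mathbb{N}$ such that (i) monomorphisms preserve (resp. strictly raise) the degree iff they are invertible (resp. non-invertible); (ii) every morphism factors as a split epimorphism followed by a monomorphism; (iii) any pair of split epimorphisms with common domain has an absolute pushout. Split epimorphisms are degeneracy operators, monomorphisms are face operators. $\mathbb{R}[r]=\mathbb{R}(-,r)$; an element $x\in X_r$ (a map $\mathbb{R}[r]\to X$) is degenerate if it factors through a non-invertible degeneracy $r\to s$, non-degenerate otherwise. For a presheaf $X$, $L_r(X)=\mathrm{colim}\,X_s$ over the category whose objects are the non-invertible degeneracies $u:r\to s$ and whose morphisms from $u$ to $u':r\to s'$ are $w:s\to s'$ with $u'=wu$; the map $L_r(X)\to X_r$ is induced by the $u^*$, and $\mathrm{Aut}(r)$ acts on everything. A map of $G$-sets $f:A\to B$ is a free $G$-extension if it is injective and $G$ acts freely on $B\setminus f(A)$. $\mathit{sk}_n(X)_r=\mathrm{colim}_{(r\to s),\,d(s)\le n}X_s$ (left Kan extension of the restriction to objects of degree $\le n$), with counit $\mathit{sk}_n(X)\to X$; $\mathit{sk}_{-1}(X)=\emptyset$. The formal boundary $\partial\mathbb{R}[r]\subseteq\mathbb{R}[r]$ is the subpresheaf of elements factoring through a non-invertible face operator $s\to r$. *)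

From Stdlib Require Import Relations ClassicalEpsilon.

Unset Implicit Arguments.

Record Cat := {
  Ob : Type;
  Hom : Ob -> Ob -> Type;
  idm : forall a, Hom a a;
  comp : forall a b c, Hom b c -> Hom a b -> Hom a c;  (* comp g f = g o f *)
  comp_id_l : forall a b (f : Hom a b), comp a b b (idm b) f = f;
  comp_id_r : forall a b (f : Hom a b), comp a a b f (idm a) = f;
  comp_assoc : forall a b c e (f : Hom a b) (g : Hom b c) (h : Hom c e),
      comp a c e h (comp a b c g f) = comp a b e (comp b c e h g) f
}.
Arguments idm {_} _.
Arguments comp {_ _ _ _} _ _.

Record Functor (C E : Cat) := {
  Fob : Ob C -> Ob E;
  Fhom : forall a b, Hom C a b -> Hom E (Fob a) (Fob b);
  F_id : forall a, Fhom a a (idm a) = idm (Fob a);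
  F_comp : forall a b c (f : Hom C a b) (g : Hom C b c),
      Fhom a c (comp g f) = comp (Fhom b c g) (Fhom a b f)
}.
Arguments Fhom {_ _} _ {_ _} _.
Arguments Fob {_ _} _ _.

Section CatNotions.
Context {C : Cat}.

Definition is_iso {a b : Ob C} (f : Hom C a b) : Prop :=
  exists g : Hom C b a, comp g f = idm a /\ comp f g = idm b.

Definition is_mono {a b : Ob C} (f : Hom C a b) : Prop :=
  forall z (u v : Hom C z a), comp f u = comp f v -> u = v.

Definition is_split_epi {a b : Ob C} (f : Hom C a b) : Prop :=
  exists s : Hom C b a, comp f s = idm b.

Definition is_pushout {a b c e : Ob C} (f : Hom C a b) (g : Hom C a c)
  (h : Hom C b e) (k : Hom C c e) : Prop :=
  comp h f = comp k g /\
  forall z (p : Hom C b z) (q : Hom C c z), comp p f = comp q g ->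
    exists t : Hom C e z, (comp t h = p /\ comp t k = q) /\
      forall t' : Hom C e z, comp t' h = p -> comp t' k = q -> t' = t.
End CatNotions.

Definition is_absolute_pushout {C : Cat} {a b c e : Ob C} (f : Hom C a b)
  (g : Hom C a c) (h : Hom C b e) (k : Hom C c e) : Prop :=
  is_pushout f g h k /\
  forall (E : Cat) (F : Functor C E),
    is_pushout (Fhom F f) (Fhom F g) (Fhom F h) (Fhom F k).

Definition is_EZ (C : Cat) (d : Ob C -> nat) : Prop :=
  (forall r s (f : Hom C r s), is_mono f ->
     (d r = d s <-> is_iso f) /\ (d r < d s <-> ~ is_iso f)) /\
  (forall r s (f : Hom C r s), exists t (e : Hom C r t) (m : Hom C t s),
     is_split_epi e /\ is_mono m /\ f = comp m e) /\
  (forall a b c (e1 : Hom C a b) (e2 : Hom C a c),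
     is_split_epi e1 -> is_split_epi e2 ->
     exists x (h : Hom C b x) (k : Hom C c x), is_absolute_pushout e1 e2 h k).

Definition is_ndegeneracy {C : Cat} {r s : Ob C} (u : Hom C r s) : Prop :=
  is_split_epi u /\ ~ is_iso u.

Definition quot {A : Type} (R : A -> A -> Prop) : Type :=
  { P : A -> Prop | exists a, P = clos_refl_sym_trans A R a }.
Definition cls {A : Type} (R : A -> A -> Prop) (a : A) : quot R :=
  exist _ (clos_refl_sym_trans A R a) (ex_intro _ a eq_refl).
Definition rep {A : Type} {R : A -> A -> Prop} (q : quot R) : A :=
  proj1_sig (constructive_indefinite_description _ (proj2_sig q)).

Record Psh (C : Cat) := {
  pobj : Ob C -> Type;
  pact : forall r s, Hom C r s -> pobj s -> pobj r   (* pact f x = f^* x *)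
}.
Arguments pobj {C} _ _.
Arguments pact {C} _ {r s} _ _.

Definition is_psh {C : Cat} (X : Psh C) : Prop :=
  (forall r (x : pobj X r), pact X (idm r) x = x) /\
  (forall r s t (f : Hom C r s) (g : Hom C s t) (x : pobj X t),
      pact X (comp g f) x = pact X f (pact X g x)).

Definition PMap {C : Cat} (X Y : Psh C) := forall r, pobj X r -> pobj Y r.

Definition is_nat {C : Cat} {X Y : Psh C} (phi : PMap X Y) : Prop :=
  forall r s (f : Hom C r s) (x : pobj X s),
    phi r (pact X f x) = pact Y f (phi s x).

Definition is_psh_mono {C : Cat} {X Y : Psh C} (phi : PMap X Y) : Prop :=
  forall (Z : Psh C) (a b : PMap Z X), is_psh Z -> is_nat a -> is_nat b ->
    (forall r z, phi r (a r z) = phi r (b r z)) ->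
    forall r z, a r z = b r z.

Definition is_psh_pushout {C : Cat} {A B Cc D : Psh C}
  (i : PMap A B) (j : PMap A Cc) (h : PMap B D) (k : PMap Cc D) : Prop :=
  (forall r a, h r (i r a) = k r (j r a)) /\
  forall (Z : Psh C) (p : PMap B Z) (q : PMap Cc Z),
    is_psh Z -> is_nat p -> is_nat q ->
    (forall r a, p r (i r a) = q r (j r a)) ->
    exists t : PMap D Z, is_nat t /\
      (forall r b, t r (h r b) = p r b) /\ (forall r c, t r (k r c) = q r c) /\
      forall t' : PMap D Z, is_nat t' ->
        (forall r b, t' r (h r b) = p r b) -> (forall r c, t' r (k r c) = q r c) ->
        forall r x, t' r x = t r x.

Definition nondegenerate {C : Cat} (Y : Psh C) (r : Ob C) (y : pobj Y r) : Prop :=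
  ~ exists s (u : Hom C r s) (z : pobj Y s), is_ndegeneracy u /\ y = pact Y u z.

Definition free_aut_ext {C : Cat} (Y : Psh C) (r : Ob C) {A : Type}
  (f : A -> pobj Y r) : Prop :=
  (forall a1 a2, f a1 = f a2 -> a1 = a2) /\
  forall y, ~ (exists a, f a = y) ->
    forall g : Hom C r r, is_iso g -> pact Y g y = y -> g = idm r.

Section Latching.
Context {C : Cat}.

Record latch_el (X : Psh C) (r : Ob C) := {
  ls : Ob C; lu : Hom C r ls; lu_deg : is_ndegeneracy lu; lx : pobj X ls }.
Arguments ls {_ _}. Arguments lu {_ _}. Arguments lu_deg {_ _}. Arguments lx {_ _}.

(* morphism w : u -> u' (u' = w u) gives (u', x') ~ (u, w^* x') *)
Definition latch_rel (X : Psh C) (r : Ob C) (a b : latch_el X r) : Prop :=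
  exists w : Hom C (ls b) (ls a), lu a = comp w (lu b) /\ lx b = pact X w (lx a).

Definition Lr (X : Psh C) (r : Ob C) : Type := quot (latch_rel X r).

Definition latch_map (X : Psh C) (r : Ob C) (l : Lr X r) : pobj X r :=
  let a := rep l in pact X (lu a) (lx a).

Definition L_map {X Y : Psh C} (phi : PMap X Y) (r : Ob C) (l : Lr X r) : Lr Y r :=
  let a := rep l in
  cls (latch_rel Y r) {| ls := ls a; lu := lu a; lu_deg := lu_deg a; lx := phi _ (lx a) |}.

(* X_r  \cup_{L_r X}  L_r Y *)
Definition rel_latch_rel {X Y : Psh C} (phi : PMap X Y) (r : Ob C)
  (p q : pobj X r + Lr Y r) : Prop :=
  exists l : Lr X r, p = inl (latch_map X r l) /\ q = inr (L_map phi r l).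

Definition RelLatch {X Y : Psh C} (phi : PMap X Y) (r : Ob C) : Type :=
  quot (rel_latch_rel phi r).

Definition rel_latch_map {X Y : Psh C} (phi : PMap X Y) (r : Ob C)
  (q : RelLatch phi r) : pobj Y r :=
  match rep q with
  | inl x => phi r x
  | inr l => latch_map Y r l
  end.
End Latching.

Section Skeleta.
Context {C : Cat} (d : Ob C -> nat).

(* sk_lt k X = sk_{k-1} X : colimit over (r -> s) with d s < k *)
Record sk_el (X : Psh C) (k : nat) (r : Ob C) := {
  ss : Ob C; sf : Hom C r ss; sdeg : d ss < k; sx : pobj X ss }.
Arguments ss {_ _ _}. Arguments sf {_ _ _}. Arguments sdeg {_ _ _}. Arguments sx {_ _ _}.

Definition sk_rel (X : Psh C) (k : nat) (r : Ob C) (a b : sk_el X k r) : Prop :=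
  exists w : Hom C (ss b) (ss a), sf a = comp w (sf b) /\ sx b = pact X w (sx a).

Definition sk_lt (X : Psh C) (k : nat) : Psh C := {|
  pobj r := quot (sk_rel X k r);
  pact r s h q := let a := rep q in
    cls (sk_rel X k r)
      {| ss := ss a; sf := comp (sf a) h; sdeg := sdeg a; sx := sx a |} |}.

Definition sk_counit (X : Psh C) (k : nat) : PMap (sk_lt X k) X :=
  fun r q => let a := rep q in pact X (sf a) (sx a).

Definition sk_map {X Y : Psh C} (phi : PMap X Y) (k : nat) :
  PMap (sk_lt X k) (sk_lt Y k) :=
  fun r q => let a := rep q in
    cls (sk_rel Y k r) {| ss := ss a; sf := sf a; sdeg := sdeg a; sx := phi _ (sx a) |}.

Definition sk_widen (X : Psh C) (k : nat) : PMap (sk_lt X k) (sk_lt X (S k)) :=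
  fun r q => let a := rep q in
    cls (sk_rel X (S k) r)
      {| ss := ss a; sf := sf a; sdeg := le_S _ _ (sdeg a); sx := sx a |}.

(* relative skeleton  relsk k phi = X \cup_{sk_{k-1} X} sk_{k-1} Y
   (objectwise pushout) *)
Definition relsk_rel {X Y : Psh C} (phi : PMap X Y) (k : nat) (r : Ob C)
  (p q : pobj X r + pobj (sk_lt Y k) r) : Prop :=
  exists l : pobj (sk_lt X k) r,
    p = inl (sk_counit X k r l) /\ q = inr (sk_map phi k r l).

Definition relsk {X Y : Psh C} (phi : PMap X Y) (k : nat) : Psh C := {|
  pobj r := quot (relsk_rel phi k r);
  pact r s h q :=
    cls (relsk_rel phi k r)
      (match rep q with
       | inl x => inl (pact X h x)
       | inr l => inr (pact (sk_lt Y k) h l)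
       end) |}.

Definition relsk_incl {X Y : Psh C} (phi : PMap X Y) (k : nat) :
  PMap (relsk phi k) (relsk phi (S k)) :=
  fun r q =>
    cls (relsk_rel phi (S k) r)
      (match rep q with
       | inl x => inl x
       | inr l => inr (sk_widen Y k r l)
       end).
End Skeleta.

Section Repr.
Context {C : Cat}.

Definition yon (r : Ob C) : Psh C := {|
  pobj s := Hom C s r;
  pact s t h f := comp f h |}.

Definition bd_pred {r s : Ob C} (f : Hom C s r) : Prop :=
  exists t (m : Hom C t r) (g : Hom C s t), is_mono m /\ ~ is_iso m /\ f = comp m g.

Lemma bd_pred_act {r s t : Ob C} (h : Hom C s t) (f : Hom C t r) :
  bd_pred f -> bd_pred (comp f h).
Proof.
  intros [u [m [g [Hm [Hi ->]]]]].
  exists u, m, (comp g h). split; [exact Hm|split; [exact Hi|]].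
  symmetry. apply comp_assoc.
Qed.

Definition bdry (r : Ob C) : Psh C := {|
  pobj s := { f : Hom C s r | bd_pred f };
  pact s t h f := exist _ (comp (proj1_sig f) h) (bd_pred_act h (proj1_sig f) (proj2_sig f)) |}.

Definition copr {I : Type} (F : I -> Psh C) : Psh C := {|
  pobj s := { i : I & pobj (F i) s };
  pact s t h x := existT _ (projT1 x) (pact (F (projT1 x)) h (projT2 x)) |}.

Definition bdry_incl {I : Type} (rho : I -> Ob C) :
  PMap (copr (fun i => bdry (rho i))) (copr (fun i => yon (rho i))) :=
  fun s x => existT _ (projT1 x) (proj1_sig (projT2 x)).
End Repr.

(** By the Eilenberg–Zilber lemma, every element of a presheaf on an EZ-category is a
    degeneracy of a non-degenerate element, uniquely up to an automorphism of its
    source.  Hence the latching map [L_r X -> X_r] is injective with image the degenerate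
    elements, and the counit [sk_(k-1) X -> X] is injective with image the elements coming
    from objects of degree [< k].  For [phi] injective, [X_r ∪_(L_r X) L_r Y] is therefore
    [phi(X_r)] together with the degenerate part of [Y_r], and [sk_(k-1)(phi)] is the
    subpresheaf of [Y] generated by [phi(X)] and the elements of degree [< k]; this gives
    (i) <-> (ii) by comparing the two sides.

    For (ii) -> (iii) one attaches a cell [R[r]] for each [Aut(r)]-orbit of non-degenerate
    [y ∉ phi(X)] with [d r = n]: every element of [sk_n(phi)] not in [sk_(n-1)(phi)] is
    [f^* y] for a split epi [f] (a non-boundary element of the cell), and trivial isotropy
    makes this description unique.  Conversely, a pushout along an injection is injective,
    so [X -> sk_k(phi)] stays injective for all [k] and [phi] is injective; and an
    automorphism [g] fixing such a [y] identifies the two non-boundary elements [f] and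
    [f g] of the cell through which [y] is attached, which a pushout along an injection
    forbids unless [g = 1]. *)
From Stdlib Require Import Relations ClassicalEpsilon FunctionalExtensionality
  PropExtensionality ProofIrrelevance Classical Eqdep Lia PeanoNat Wf_nat.

Arguments comp_id_l {_ _ _} _.
Arguments comp_id_r {_ _ _} _.
Arguments comp_assoc {_ _ _ _ _} _ _ _.
Arguments ls {C X r} _. Arguments lu {C X r} _. Arguments lu_deg {C X r} _. Arguments lx {C X r} _.
Arguments ss {C d X k r} _. Arguments sf {C d X k r} _. Arguments sdeg {C d X k r} _.
Arguments sx {C d X k r} _.

Section Quotient.
Context {A : Type} (R : A -> A -> Prop).
Notation rst := (clos_refl_sym_trans A R).

Lemma cls_eq a b : rst a b -> cls R a = cls R b.
Proof.
  intro H. apply (eq_sig_hprop (fun _ => proof_irrelevance _)); simpl.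
  apply functional_extensionality; intro c. apply propositional_extensionality; split; intro Hc.
  - eapply rst_trans; [apply rst_sym; exact H | exact Hc].
  - eapply rst_trans; [exact H | exact Hc].
Qed.

Lemma cls_inj a b : cls R a = cls R b -> rst a b.
Proof.
  intro H. apply (f_equal (@proj1_sig _ _)) in H; simpl in H.
  assert (E : rst b b) by apply rst_refl. rewrite <- H in E. exact E.
Qed.

Lemma cls_rep (q : quot R) : cls R (rep q) = q.
Proof.
  apply (eq_sig_hprop (fun _ => proof_irrelevance _)); simpl. unfold rep.
  destruct (constructive_indefinite_description _ (proj2_sig q)) as [a Ha]. simpl.
  symmetry. exact Ha.
Qed.

Lemma cls_surj (q : quot R) : exists a, q = cls R a.
Proof. exists (rep q). symmetry. apply cls_rep. Qed.

Lemma rep_cls a : rst (rep (cls R a)) a.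
Proof. apply cls_inj, cls_rep. Qed.

Lemma rst_invariant {B : Type} (g : A -> B) :
  (forall a a', R a a' -> g a = g a') -> forall a a', rst a a' -> g a = g a'.
Proof. intros Hg a a' H. induction H; auto; congruence. Qed.

Lemma invariant_rep_cls {B : Type} (g : A -> B) :
  (forall a a', R a a' -> g a = g a') -> forall a, g (rep (cls R a)) = g a.
Proof. intros Hg a. apply (rst_invariant g Hg), rep_cls. Qed.

Lemma rst_equiv : (forall a, R a a) -> (forall a b, R a b -> R b a) ->
  (forall a b c, R a b -> R b c -> R a c) -> forall a b, rst a b -> R a b.
Proof. intros Hr Hs Ht a b H. induction H; eauto. Qed.
End Quotient.

Lemma cls_map_rep_cls {A B : Type} (R : A -> A -> Prop) (S : B -> B -> Prop) (g : A -> B) :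
  (forall a a', R a a' -> clos_refl_sym_trans B S (g a) (g a')) ->
  forall a, cls S (g (rep (cls R a))) = cls S (g a).
Proof.
  intros Hg a. apply cls_eq.
  assert (Hmap : forall a a', clos_refl_sym_trans A R a a' ->
                   clos_refl_sym_trans B S (g a) (g a')).
  { intros a1 a2 H. induction H; eauto using rst_refl, rst_sym, rst_trans. }
  apply Hmap, rep_cls.
Qed.

Section PresheafLaws.
Context {C : Cat} {X : Psh C} (HX : is_psh X).

Lemma psh_id {r} (x : pobj X r) : pact X (idm r) x = x.
Proof. apply HX. Qed.

Lemma psh_comp {r s t} (f : Hom C r s) (g : Hom C s t) x :
  pact X (comp g f) x = pact X f (pact X g x).
Proof. apply HX. Qed.
End PresheafLaws.

Section CategoryFacts.
Context {C : Cat}.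

Lemma id_is_iso a : is_iso (idm a : Hom C a a).
Proof. exists (idm a). rewrite comp_id_l. auto. Qed.

Lemma id_split_epi a : is_split_epi (idm a : Hom C a a).
Proof. exists (idm a). apply comp_id_l. Qed.

Lemma section_is_mono {a b} (e : Hom C a b) (s : Hom C b a) :
  comp e s = idm b -> is_mono s.
Proof.
  intros H z u v E.
  rewrite <- (comp_id_l u), <- (comp_id_l v), <- H, <- !comp_assoc, E. reflexivity.
Qed.

Lemma iso_is_mono {a b} (f : Hom C a b) : is_iso f -> is_mono f.
Proof. intros [g [H1 _]]. exact (section_is_mono g f H1). Qed.

Lemma iso_is_split_epi {a b} (f : Hom C a b) : is_iso f -> is_split_epi f.
Proof. intros [g [_ H2]]. exists g. exact H2. Qed.

Lemma split_epi_comp {a b c} (f : Hom C a b) (g : Hom C b c) :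
  is_split_epi f -> is_split_epi g -> is_split_epi (comp g f).
Proof.
  intros [s Hs] [t Ht]. exists (comp s t).
  rewrite <- comp_assoc, (comp_assoc t s f), Hs, comp_id_l. exact Ht.
Qed.

Lemma iso_comp {a b c} (f : Hom C a b) (g : Hom C b c) :
  is_iso f -> is_iso g -> is_iso (comp g f).
Proof.
  intros [f' [Hf1 Hf2]] [g' [Hg1 Hg2]]. exists (comp f' g'). split.
  - rewrite <- comp_assoc, (comp_assoc f g g'), Hg1, comp_id_l. exact Hf1.
  - rewrite <- comp_assoc, (comp_assoc g' f' f), Hf2, comp_id_l. exact Hg2.
Qed.

Lemma split_epi_retraction_iso {a b} (u : Hom C a b) (r : Hom C b a) :
  is_split_epi u -> comp r u = idm a -> is_iso u.
Proof.
  intros [s Hs] Hr. exists r. split; auto.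
  replace r with s; [exact Hs|].
  rewrite <- (comp_id_r r), <- Hs, comp_assoc, Hr, comp_id_l. reflexivity.
Qed.

Lemma split_epi_mono_iso {a b} (u : Hom C a b) : is_split_epi u -> is_mono u -> is_iso u.
Proof.
  intros [s Hs] Hm. exists s. split; auto.
  apply Hm. rewrite comp_assoc, Hs, comp_id_l, comp_id_r. reflexivity.
Qed.

Lemma ndegeneracy_comp {r s t} (u : Hom C r s) (v : Hom C s t) :
  is_ndegeneracy u -> is_split_epi v -> is_ndegeneracy (comp v u).
Proof.
  intros [Hu Hi] Hv. split; [apply split_epi_comp; auto|].
  intros [g [G1 _]]. apply Hi. apply (split_epi_retraction_iso u (comp g v) Hu).
  rewrite <- comp_assoc. exact G1.
Qed.
End CategoryFacts.

Section Degree.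
Context {C : Cat} (d : Ob C -> nat) (HEZ : is_EZ C d).

Lemma mono_deg_le {r s} (f : Hom C r s) : is_mono f -> d r <= d s.
Proof.
  intro Hm. destruct (proj1 HEZ r s f Hm) as [[_ B] [_ F]].
  destruct (classic (is_iso f)) as [Hi|Hi]; [rewrite (B Hi)|specialize (F Hi)]; lia.
Qed.

Lemma mono_deg_eq_iso {r s} (f : Hom C r s) : is_mono f -> d r = d s -> is_iso f.
Proof. intro Hm. apply (proj1 HEZ r s f Hm). Qed.

Lemma mono_noniso_deg_lt {r s} (f : Hom C r s) : is_mono f -> ~ is_iso f -> d r < d s.
Proof. intro Hm. apply (proj1 HEZ r s f Hm). Qed.

Lemma iso_deg_eq {r s} (f : Hom C r s) : is_iso f -> d r = d s.
Proof. intro Hi. apply (proj1 HEZ r s f (iso_is_mono f Hi)). exact Hi. Qed.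

Lemma split_epi_deg_le {r s} (u : Hom C r s) : is_split_epi u -> d s <= d r.
Proof. intros [m Hm]. exact (mono_deg_le m (section_is_mono u m Hm)). Qed.

Lemma split_epi_noniso_deg_lt {r s} (u : Hom C r s) :
  is_split_epi u -> ~ is_iso u -> d s < d r.
Proof.
  intros [m Hm] Hi. pose proof (section_is_mono u m Hm) as Hmm.
  destruct (Nat.eq_dec (d s) (d r)) as [E|E]; [|pose proof (mono_deg_le m Hmm); lia].
  exfalso. apply Hi. destruct (mono_deg_eq_iso m Hmm E) as [m' [A B]].
  replace u with m'; [exists m; split; auto|].
  rewrite <- (comp_id_r u), <- B, comp_assoc, Hm, comp_id_l. reflexivity.
Qed.

Lemma EZ_factor {r s} (f : Hom C r s) : exists t (e : Hom C r t) (m : Hom C t s),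
  is_split_epi e /\ is_mono m /\ f = comp m e.
Proof. apply (proj1 (proj2 HEZ)). Qed.
End Degree.

Section AbsolutePushout.
Context {C : Cat}.

(* [Hom(p,-)], with one extra object whose "hom-set" is [Prop], used as a test object
   for joint surjectivity. *)
Definition hom_or_prop (p : Ob C) (a : option (Ob C)) : Type :=
  match a with None => Prop | Some a => Hom C p a end.

Definition hom_test_cat (p : Ob C) : Cat := {|
  Ob := option (Ob C); Hom a b := hom_or_prop p a -> hom_or_prop p b;
  idm a := fun x => x; comp a b c g f := fun x => g (f x);
  comp_id_l := fun _ _ _ => eq_refl; comp_id_r := fun _ _ _ => eq_refl;
  comp_assoc := fun _ _ _ _ _ _ _ => eq_refl |}.

Program Definition hom_test_functor (p : Ob C) : Functor C (hom_test_cat p) := {|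
  Fob := Some;
  Fhom a b f := (fun g : Hom C p a => comp f g) : hom_or_prop p (Some a) -> hom_or_prop p (Some b) |}.
Next Obligation. apply functional_extensionality; intro x. apply comp_id_l. Qed.
Next Obligation. apply functional_extensionality; intro x; simpl. symmetry. apply comp_assoc. Qed.

(* [Hom(e,-)] preserves the pushout, so [idm e] factors through [h] or through [k]. *)
Lemma absolute_pushout_split_epi {a b c e} (u : Hom C a b) (v : Hom C a c)
  (h : Hom C b e) (k : Hom C c e) :
  is_split_epi u -> is_split_epi v -> is_absolute_pushout u v h k ->
  is_split_epi h /\ is_split_epi k.
Proof.
  intros [su Hsu] [sv Hsv] [[Hc _] Habs].
  destruct (proj2 (Habs _ (hom_test_functor e)) None (fun _ => True) (fun _ => True) eq_refl)
    as [t [_ Ht]].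
  set (through_h_or_k := (fun x : Hom C e e => (exists y, x = comp h y) \/ (exists y, x = comp k y))
         : hom_or_prop e (Some e) -> hom_or_prop e None).
  assert (E1 : through_h_or_k = t).
  { apply Ht; simpl; apply functional_extensionality; intro y;
      apply propositional_extensionality; split; auto; intros _; [left|right]; exists y; reflexivity. }
  assert (E2 : (fun _ => True) = t) by (apply Ht; reflexivity).
  assert (Hid : through_h_or_k (idm e)) by (rewrite E1, <- E2; exact I).
  destruct Hid as [[y Hy]|[y Hy]].
  - split; [exists y; auto|]. exists (comp v (comp su y)).
    rewrite comp_assoc, <- Hc, <- comp_assoc, (comp_assoc y su u), Hsu, comp_id_l. auto.
  - split; [|exists y; auto]. exists (comp u (comp sv y)).
    rewrite comp_assoc, Hc, <- comp_assoc, (comp_assoc y sv v), Hsv, comp_id_l. auto.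
Qed.

Context (X : Psh C) (HX : is_psh X).

Definition psh_or_unit (a : option (Ob C)) : Type :=
  match a with None => unit | Some a => pobj X a end.

Definition psh_test_cat : Cat := {|
  Ob := option (Ob C); Hom a b := psh_or_unit b -> psh_or_unit a;
  idm a := fun x => x; comp a b c g f := fun x => f (g x);
  comp_id_l := fun _ _ _ => eq_refl; comp_id_r := fun _ _ _ => eq_refl;
  comp_assoc := fun _ _ _ _ _ _ _ => eq_refl |}.

Program Definition psh_test_functor : Functor C psh_test_cat := {|
  Fob := Some; Fhom a b f := (pact X f : psh_or_unit (Some b) -> psh_or_unit (Some a)) |}.
Next Obligation. apply functional_extensionality; intro x. apply (psh_id HX). Qed.
Next Obligation. apply functional_extensionality; intro x. apply (psh_comp HX). Qed.

(* [X], seen as a functor into the opposite of sets, sends the pushout to a pullback. *)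
Lemma absolute_pushout_glue {a b c e} (u : Hom C a b) (v : Hom C a c)
  (h : Hom C b e) (k : Hom C c e) (z : pobj X b) (w : pobj X c) :
  is_absolute_pushout u v h k -> pact X u z = pact X v w ->
  exists x, pact X h x = z /\ pact X k x = w.
Proof.
  intros [_ Habs] E.
  destruct (proj2 (Habs _ psh_test_functor) None (fun _ => z) (fun _ => w)) as [t [[Ht1 Ht2] _]].
  - simpl. apply functional_extensionality; intros []. exact E.
  - exists (t tt). split; [exact (f_equal (fun f => f tt) Ht1) | exact (f_equal (fun f => f tt) Ht2)].
Qed.
End AbsolutePushout.

Section EilenbergZilber.
Context {C : Cat} (d : Ob C -> nat) (HEZ : is_EZ C d) (X : Psh C) (HX : is_psh X).

Lemma nondegenerate_split_epi_iso {r s} (u : Hom C r s) (z : pobj X s) :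
  is_split_epi u -> nondegenerate X r (pact X u z) -> is_iso u.
Proof. intros Hu Hn. apply NNPP; intro Hi. apply Hn. exists s, u, z. split; [split|]; auto. Qed.

Lemma EZ_exists r (x : pobj X r) : exists s (u : Hom C r s) z,
  is_split_epi u /\ nondegenerate X s z /\ x = pact X u z.
Proof.
  remember (d r) as n eqn:En. revert r x En.
  induction n as [n IH] using lt_wf_ind; intros r x En.
  destruct (classic (nondegenerate X r x)) as [Hn|Hn].
  - exists r, (idm r), x. split; [apply id_split_epi|]. split; auto. symmetry; apply (psh_id HX).
  - apply NNPP in Hn. destruct Hn as [s [u [z [[Hu Hi] E]]]].
    pose proof (split_epi_noniso_deg_lt d HEZ u Hu Hi).
    destruct (IH (d s) ltac:(lia) s z eq_refl) as [t [v [w [Hv [Hw E2]]]]].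
    exists t, (comp v u), w. split; [apply split_epi_comp; auto|]. split; auto.
    rewrite (psh_comp HX), <- E2. exact E.
Qed.

Lemma EZ_unique {r s t} (u : Hom C r s) (v : Hom C r t) z w :
  is_split_epi u -> is_split_epi v -> nondegenerate X s z -> nondegenerate X t w ->
  pact X u z = pact X v w ->
  exists th : Hom C s t, is_iso th /\ v = comp th u /\ z = pact X th w.
Proof.
  intros Hu Hv Hz Hw E.
  destruct (proj2 (proj2 HEZ) _ _ _ u v Hu Hv) as [p [h [k Hp]]].
  destruct (absolute_pushout_split_epi u v h k Hu Hv Hp) as [Hh Hk].
  destruct (absolute_pushout_glue X HX u v h k z w Hp E) as [c [Ec1 Ec2]].
  assert (Ih : is_iso h) by (apply (nondegenerate_split_epi_iso h c Hh); rewrite Ec1; exact Hz).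
  assert (Ik : is_iso k) by (apply (nondegenerate_split_epi_iso k c Hk); rewrite Ec2; exact Hw).
  destruct Ik as [k' [Hk1 Hk2]].
  exists (comp k' h). split; [apply iso_comp; auto; exists k; split; auto|]. split.
  - destruct Hp as [[Hc _] _]. rewrite <- comp_assoc, Hc, comp_assoc, Hk1, comp_id_l. reflexivity.
  - rewrite (psh_comp HX h k'), <- Ec2, <- (psh_comp HX k' k), Hk2, (psh_id HX). symmetry; exact Ec1.
Qed.

Lemma nondegenerate_iso_act {r s} (g : Hom C r s) (z : pobj X s) :
  is_iso g -> nondegenerate X s z -> nondegenerate X r (pact X g z).
Proof.
  intros [g' [H1 H2]] Hz [t [u [w [[Hu Hi] E]]]]. apply Hz.
  exists t, (comp u g'), w. split; [split|].
  - apply split_epi_comp; auto. apply iso_is_split_epi. exists g. split; auto.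
  - intro Hi2. apply Hi. replace u with (comp (comp u g') g)
      by (rewrite <- comp_assoc, H1, comp_id_r; reflexivity).
    apply iso_comp; auto. exists g'; split; auto.
  - rewrite (psh_comp HX), <- E, <- (psh_comp HX), H2, (psh_id HX). reflexivity.
Qed.

Lemma nondegenerate_deg_le {r t} (y : pobj X r) (f : Hom C r t) x :
  nondegenerate X r y -> y = pact X f x -> d r <= d t.
Proof.
  intros Hy E. destruct (EZ_factor d HEZ f) as [t1 [e [m [He [Hm ->]]]]].
  rewrite (psh_comp HX) in E. subst y.
  pose proof (iso_deg_eq d HEZ e (nondegenerate_split_epi_iso e _ He Hy)).
  pose proof (mono_deg_le d HEZ m Hm). lia.
Qed.

Lemma EZ_exists_deg_le {s t} (f : Hom C s t) (x : pobj X t) : exists t' (u : Hom C s t') z,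
  is_split_epi u /\ nondegenerate X t' z /\ d t' <= d t /\ pact X f x = pact X u z.
Proof.
  destruct (EZ_factor d HEZ f) as [t1 [e [m [He [Hm ->]]]]].
  destruct (EZ_exists t1 (pact X m x)) as [t2 [e' [z [He' [Hz E]]]]].
  exists t2, (comp e' e), z. split; [apply split_epi_comp; auto|]. split; auto. split.
  - pose proof (split_epi_deg_le d HEZ e' He'). pose proof (mono_deg_le d HEZ m Hm). lia.
  - rewrite !(psh_comp HX), E. reflexivity.
Qed.

Lemma EZ_deg_le {s t t'} (f : Hom C s t) (x : pobj X t) (u : Hom C s t') z :
  is_split_epi u -> nondegenerate X t' z -> pact X f x = pact X u z -> d t' <= d t.
Proof.
  intros Hu Hz E. destruct (EZ_exists_deg_le f x) as [t2 [u' [z' [Hu' [Hz' [Hd E']]]]]].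
  rewrite E' in E. destruct (EZ_unique u' u z' z Hu' Hu Hz' Hz E) as [th [Ht _]].
  pose proof (iso_deg_eq d HEZ th Ht). lia.
Qed.
End EilenbergZilber.

Definition objectwise_injective {C : Cat} {X Y : Psh C} (phi : PMap X Y) : Prop :=
  forall r (x x' : pobj X r), phi r x = phi r x' -> x = x'.

Definition trivial_isotropy {C : Cat} {X Y : Psh C} (phi : PMap X Y) : Prop :=
  forall (r : Ob C) (y : pobj Y r), nondegenerate Y r y -> ~ (exists x, phi r x = y) ->
    forall g : Hom C r r, is_iso g -> pact Y g y = y -> g = idm r.

Lemma yon_is_psh {C : Cat} (r : Ob C) : is_psh (yon r).
Proof. split; intros; simpl; [apply comp_id_r | apply comp_assoc]. Qed.

Lemma psh_mono_injective {C : Cat} {X Y : Psh C} (HX : is_psh X) (phi : PMap X Y) :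
  is_nat phi -> is_psh_mono phi -> objectwise_injective phi.
Proof.
  intros Hphi Hm r x x' E.
  pose (a := (fun s (f : Hom C s r) => pact X f x) : PMap (yon r) X).
  pose (b := (fun s (f : Hom C s r) => pact X f x') : PMap (yon r) X).
  assert (Ha : is_nat a) by (intros s t f g; apply (psh_comp HX)).
  assert (Hb : is_nat b) by (intros s t f g; apply (psh_comp HX)).
  assert (Hab : a r (idm r) = b r (idm r)).
  { apply (Hm (yon r) a b (yon_is_psh r) Ha Hb).
    intros s f. unfold a, b. rewrite !Hphi, E. reflexivity. }
  unfold a, b in Hab. rewrite !(psh_id HX) in Hab. exact Hab.
Qed.

Lemma injective_psh_mono {C : Cat} {X Y : Psh C} (phi : PMap X Y) :
  objectwise_injective phi -> is_psh_mono phi.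
Proof. intros Hi Z a b _ _ _ H r z. apply Hi, H. Qed.

Section Latching.
Context {C : Cat} (d : Ob C -> nat) (HEZ : is_EZ C d).

Section OnePresheaf.
Context (X : Psh C) (HX : is_psh X).

Definition latch_val {r} (a : latch_el X r) : pobj X r := pact X (lu a) (lx a).

Lemma latch_rel_val {r} (a b : latch_el X r) : latch_rel X r a b -> latch_val a = latch_val b.
Proof. intros [w [E1 E2]]. unfold latch_val. rewrite E2, <- (psh_comp HX), <- E1. reflexivity. Qed.

Lemma latch_map_cls {r} (a : latch_el X r) : latch_map X r (cls (latch_rel X r) a) = latch_val a.
Proof. exact (invariant_rep_cls _ latch_val (@latch_rel_val r) a). Qed.

Lemma latch_normal_form {r} (a : latch_el X r) : exists b : latch_el X r,
  clos_refl_sym_trans _ (latch_rel X r) a b /\ nondegenerate X (ls b) (lx b).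
Proof.
  destruct a as [s u Hu x].
  destruct (EZ_exists d HEZ X HX s x) as [t [v [z [Hv [Hz E]]]]].
  exists {| ls := t; lu := comp v u; lu_deg := ndegeneracy_comp u v Hu Hv; lx := z |}.
  split; auto. apply rst_sym, rst_step. exists v. auto.
Qed.

Lemma latch_map_inj {r} (l l' : Lr X r) : latch_map X r l = latch_map X r l' -> l = l'.
Proof.
  destruct (cls_surj _ l) as [a ->], (cls_surj _ l') as [b ->].
  rewrite !latch_map_cls. intro E. apply cls_eq.
  destruct (latch_normal_form a) as [a1 [Ha1 Na1]], (latch_normal_form b) as [b1 [Hb1 Nb1]].
  rewrite (rst_invariant _ _ (@latch_rel_val r) _ _ Ha1),
          (rst_invariant _ _ (@latch_rel_val r) _ _ Hb1) in E.
  eapply rst_trans; [exact Ha1|]. eapply rst_trans; [|apply rst_sym; exact Hb1].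
  destruct (EZ_unique d HEZ X HX (lu a1) (lu b1) (lx a1) (lx b1)
              (proj1 (lu_deg a1)) (proj1 (lu_deg b1)) Na1 Nb1 E) as [th [_ [E1 E2]]].
  apply rst_sym, rst_step. exists th. auto.
Qed.

Lemma latch_map_degenerate {r} (l : Lr X r) : ~ nondegenerate X r (latch_map X r l).
Proof.
  intro H. apply H. exists (ls (rep l)), (lu (rep l)), (lx (rep l)).
  split; [apply lu_deg | reflexivity].
Qed.

Lemma degenerate_latch_image {r} (x : pobj X r) :
  ~ nondegenerate X r x -> exists l, latch_map X r l = x.
Proof.
  intro H. apply NNPP in H. destruct H as [s [u [z [Hu E]]]].
  exists (cls (latch_rel X r) {| ls := s; lu := u; lu_deg := Hu; lx := z |}).
  rewrite latch_map_cls. symmetry. exact E.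
Qed.
End OnePresheaf.

Context (X Y : Psh C) (HX : is_psh X) (HY : is_psh Y) (phi : PMap X Y) (Hphi : is_nat phi).

Lemma latch_map_L_map {r} (l : Lr X r) : latch_map Y r (L_map phi r l) = phi r (latch_map X r l).
Proof. unfold L_map. rewrite (latch_map_cls Y HY). unfold latch_val. simpl. symmetry. apply Hphi. Qed.

Definition rel_latch_val {r} (p : pobj X r + Lr Y r) : pobj Y r :=
  match p with inl x => phi r x | inr l => latch_map Y r l end.

Lemma rel_latch_map_cls {r} p : rel_latch_map phi r (cls (rel_latch_rel phi r) p) = rel_latch_val p.
Proof.
  apply (invariant_rep_cls _ rel_latch_val). intros a a' [l [-> ->]].
  symmetry. apply latch_map_L_map.
Qed.

Lemma injective_nondegenerate (Hi : objectwise_injective phi) {r} (z : pobj X r) :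
  nondegenerate X r z -> nondegenerate Y r (phi r z).
Proof.
  intros Hz [s [u [y [[[sg Hsg] Hu] E]]]]. apply Hz.
  assert (Ey : y = phi s (pact X sg z))
    by (rewrite Hphi, E, <- (psh_comp HY), Hsg, (psh_id HY); reflexivity).
  exists s, u, (pact X sg z). split; [split; [exists sg|]; auto|].
  apply Hi. rewrite Hphi, <- Ey. exact E.
Qed.

(* An element of [X_r] identified with a latching element of [Y] is degenerate, hence
   itself comes from [L_r X]. *)
Lemma rel_latch_identify (Hi : objectwise_injective phi) {r} x (l : Lr Y r) :
  phi r x = latch_map Y r l -> clos_refl_sym_trans _ (rel_latch_rel phi r) (inl x) (inr l).
Proof.
  intro E. destruct (EZ_exists d HEZ X HX r x) as [s [v [z [Hv [Hz Ex]]]]].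
  destruct (classic (is_iso v)) as [Iv|Iv].
  - exfalso. apply (latch_map_degenerate Y l). rewrite <- E, Ex, Hphi.
    apply (nondegenerate_iso_act Y HY); auto. apply injective_nondegenerate; auto.
  - set (la := cls (latch_rel X r) {| ls := s; lu := v; lu_deg := conj Hv Iv; lx := z |}).
    assert (Ela : latch_map X r la = x) by (unfold la; rewrite (latch_map_cls X HX); auto).
    apply rst_step. exists la. rewrite Ela. split; auto.
    f_equal. apply (latch_map_inj Y HY). rewrite latch_map_L_map, Ela. auto.
Qed.

Lemma free_ext_of_trivial_isotropy :
  objectwise_injective phi -> trivial_isotropy phi ->
  forall r, free_aut_ext Y r (rel_latch_map phi r).
Proof.
  intros Hi Hiso r. split.
  - intros q q'. destruct (cls_surj _ q) as [p ->], (cls_surj _ q') as [p' ->].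
    rewrite !rel_latch_map_cls. intro E. apply cls_eq.
    destruct p as [x|l], p' as [x'|l']; simpl in E.
    + rewrite (Hi _ _ _ E). apply rst_refl.
    + apply rel_latch_identify; auto.
    + apply rst_sym, rel_latch_identify; auto.
    + rewrite (latch_map_inj Y HY _ _ E). apply rst_refl.
  - intros y Hy g Hg Eg. apply (Hiso r y); auto.
    + intro Hd. destruct (degenerate_latch_image Y HY y (fun H => H Hd)) as [l El].
      apply Hy. exists (cls (rel_latch_rel phi r) (inr l)). rewrite rel_latch_map_cls. exact El.
    + intros [x Ex]. apply Hy. exists (cls (rel_latch_rel phi r) (inl x)).
      rewrite rel_latch_map_cls. exact Ex.
Qed.

Lemma rel_latch_class_nondegenerate {r} (x : pobj X r) : nondegenerate X r x ->
  forall p, clos_refl_sym_trans _ (rel_latch_rel phi r) (inl x) p -> p = inl x.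
Proof.
  intros Hx.
  assert (H : forall p q, clos_refl_sym_trans _ (rel_latch_rel phi r) p q ->
                (p = inl x <-> q = inl x)).
  { intros p q H. induction H as [p q [l [-> ->]]| | |]; try tauto.
    split; intro E; try discriminate. injection E as E. exfalso.
    apply (latch_map_degenerate X l). rewrite E. exact Hx. }
  intros p Hp. apply (H _ _ Hp). reflexivity.
Qed.

(* A non-degenerate [z] is alone in its class of [X_r ∪ L_r Y], so injectivity of the
   relative latching map reaches non-degenerate elements; the EZ lemma spreads it. *)
Lemma injective_of_free_ext :
  (forall r, free_aut_ext Y r (rel_latch_map phi r)) -> objectwise_injective phi.
Proof.
  intros Hfree.
  assert (Hnd : forall r (z x : pobj X r), nondegenerate X r z -> phi r z = phi r x -> z = x).
  { intros r z x Hz E.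
    assert (E2 : cls (rel_latch_rel phi r) (inl z) = cls (rel_latch_rel phi r) (inl x))
      by (apply (proj1 (Hfree r)); rewrite !rel_latch_map_cls; exact E).
    apply cls_inj, rel_latch_class_nondegenerate in E2; auto. congruence. }
  assert (Hpres : forall r (z : pobj X r), nondegenerate X r z -> nondegenerate Y r (phi r z)).
  { intros r z Hz. apply NNPP; intro Hd. apply (degenerate_latch_image Y HY) in Hd.
    destruct Hd as [l El].
    assert (E2 : cls (rel_latch_rel phi r) (inl z) = cls (rel_latch_rel phi r) (inr l))
      by (apply (proj1 (Hfree r)); rewrite !rel_latch_map_cls; auto).
    apply cls_inj, rel_latch_class_nondegenerate in E2; auto. discriminate. }
  intros r x x' E.
  destruct (EZ_exists d HEZ X HX r x) as [s [u [z [Hu [Hz ->]]]]].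
  destruct (EZ_exists d HEZ X HX r x') as [s' [u' [z' [Hu' [Hz' ->]]]]].
  rewrite !Hphi in E.
  destruct (EZ_unique d HEZ Y HY u u' _ _ Hu Hu' (Hpres _ _ Hz) (Hpres _ _ Hz') E)
    as [th [_ [-> E2]]].
  rewrite <- Hphi in E2. apply Hnd in E2; auto. subst. rewrite (psh_comp HX). reflexivity.
Qed.

Lemma trivial_isotropy_of_free_ext :
  (forall r, free_aut_ext Y r (rel_latch_map phi r)) -> trivial_isotropy phi.
Proof.
  intros Hfree r y Hy Hn g Hg Eg. apply (proj2 (Hfree r) y); auto.
  intros [q Eq]. unfold rel_latch_map in Eq. destruct (rep q) as [x|l].
  - apply Hn. exists x; auto.
  - apply (latch_map_degenerate Y l). rewrite Eq. exact Hy.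
Qed.
End Latching.

Section Skeleta.
Context {C : Cat} (d : Ob C -> nat) (HEZ : is_EZ C d).

Definition low_degree (X : Psh C) (k : nat) {r} (y : pobj X r) : Prop :=
  exists t (f : Hom C r t) (x : pobj X t), d t < k /\ y = pact X f x.

Section OnePresheaf.
Context (X : Psh C) (HX : is_psh X).

Definition sk_val {k r} (a : sk_el d X k r) : pobj X r := pact X (sf a) (sx a).

Lemma sk_rel_val {k r} (a b : sk_el d X k r) : sk_rel d X k r a b -> sk_val a = sk_val b.
Proof. intros [w [E1 E2]]. unfold sk_val. rewrite E2, <- (psh_comp HX), <- E1. reflexivity. Qed.

Lemma sk_counit_cls {k r} (a : sk_el d X k r) : sk_counit d X k r (cls (sk_rel d X k r) a) = sk_val a.
Proof. exact (invariant_rep_cls _ sk_val (@sk_rel_val k r) a). Qed.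

Definition sk_el_act {k r r'} (h : Hom C r' r) (a : sk_el d X k r) : sk_el d X k r' :=
  {| ss := ss a; sf := comp (sf a) h; sdeg := sdeg a; sx := sx a |}.

Lemma sk_act_cls {k r r'} (h : Hom C r' r) a :
  pact (sk_lt d X k) h (cls (sk_rel d X k r) a) = cls (sk_rel d X k r') (sk_el_act h a).
Proof.
  refine (cls_map_rep_cls _ _ (sk_el_act h) _ a). intros a1 a2 [w [E1 E2]]. apply rst_step.
  exists w. simpl. rewrite E1, comp_assoc. auto.
Qed.

Lemma sk_lt_psh k : is_psh (sk_lt d X k).
Proof.
  split.
  - intros r q. destruct (cls_surj _ q) as [[s f Hd x] ->].
    rewrite sk_act_cls. unfold sk_el_act; simpl. rewrite comp_id_r. reflexivity.
  - intros r s t f g q. destruct (cls_surj _ q) as [[s' f' Hd x] ->].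
    rewrite !sk_act_cls. unfold sk_el_act; simpl. rewrite comp_assoc. reflexivity.
Qed.

Lemma sk_counit_nat k : is_nat (sk_counit d X k).
Proof.
  intros r r' h q. destruct (cls_surj _ q) as [a ->].
  rewrite sk_act_cls, !sk_counit_cls. apply (psh_comp HX).
Qed.

Definition sk_el_widen {k r} (a : sk_el d X k r) : sk_el d X (S k) r :=
  {| ss := ss a; sf := sf a; sdeg := le_S _ _ (sdeg a); sx := sx a |}.

Lemma sk_widen_cls {k r} a :
  sk_widen d X k r (cls (sk_rel d X k r) a) = cls (sk_rel d X (S k) r) (sk_el_widen a).
Proof. refine (cls_map_rep_cls _ _ sk_el_widen _ a). intros a1 a2 H. apply rst_step. exact H. Qed.

Lemma sk_counit_widen {k r} q : sk_counit d X (S k) r (sk_widen d X k r q) = sk_counit d X k r q.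
Proof. destruct (cls_surj _ q) as [a ->]. rewrite sk_widen_cls, !sk_counit_cls. reflexivity. Qed.

Lemma sk_widen_nat k : is_nat (sk_widen d X k).
Proof.
  intros r r' h q. destruct (cls_surj _ q) as [a ->].
  rewrite sk_act_cls, !sk_widen_cls, sk_act_cls. reflexivity.
Qed.

Lemma sk_counit_image {k r} (y : pobj X r) : (exists q, sk_counit d X k r q = y) <-> low_degree X k y.
Proof.
  split.
  - intros [q <-]. destruct (cls_surj _ q) as [a ->]. rewrite sk_counit_cls.
    exists (ss a), (sf a), (sx a). split; [apply sdeg | reflexivity].
  - intros [t [f [x [Hd E]]]].
    exists (cls (sk_rel d X k r) {| ss := t; sf := f; sdeg := Hd; sx := x |}).
    rewrite sk_counit_cls. symmetry. exact E.
Qed.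

Lemma sk_normal_form {k r} (a : sk_el d X k r) : exists b : sk_el d X k r,
  clos_refl_sym_trans _ (sk_rel d X k r) a b /\ is_split_epi (sf b) /\ nondegenerate X (ss b) (sx b).
Proof.
  destruct a as [t f Hd x].
  destruct (EZ_factor d HEZ f) as [t1 [e [m [He [Hm ->]]]]].
  destruct (EZ_exists d HEZ X HX t1 (pact X m x)) as [t2 [e' [z [He' [Hz E]]]]].
  pose proof (mono_deg_le d HEZ m Hm) as Hm1.
  pose proof (split_epi_deg_le d HEZ e' He').
  exists {| ss := t2; sf := comp e' e; sdeg := ltac:(simpl in *; lia) : d t2 < k; sx := z |}.
  split; [|split; auto; apply split_epi_comp; auto].
  apply rst_trans with {| ss := t1; sf := e; sdeg := Nat.le_lt_trans _ _ _ Hm1 Hd; sx := pact X m x |}.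
  - apply rst_step. exists m. auto.
  - apply rst_sym, rst_step. exists e'. auto.
Qed.

Lemma sk_counit_inj {k r} (l l' : pobj (sk_lt d X k) r) :
  sk_counit d X k r l = sk_counit d X k r l' -> l = l'.
Proof.
  destruct (cls_surj _ l) as [a ->], (cls_surj _ l') as [b ->].
  rewrite !sk_counit_cls. intro E. apply cls_eq.
  destruct (sk_normal_form a) as [a1 [Ha1 [Sa1 Na1]]], (sk_normal_form b) as [b1 [Hb1 [Sb1 Nb1]]].
  rewrite (rst_invariant _ _ (@sk_rel_val k r) _ _ Ha1),
          (rst_invariant _ _ (@sk_rel_val k r) _ _ Hb1) in E.
  eapply rst_trans; [exact Ha1|]. eapply rst_trans; [|apply rst_sym; exact Hb1].
  destruct (EZ_unique d HEZ X HX (sf a1) (sf b1) (sx a1) (sx b1) Sa1 Sb1 Na1 Nb1 E)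
    as [th [_ [E1 E2]]].
  apply rst_sym, rst_step. exists th. auto.
Qed.
End OnePresheaf.

Context (X Y : Psh C) (HX : is_psh X) (HY : is_psh Y) (phi : PMap X Y) (Hphi : is_nat phi).

Definition sk_el_map {k r} (a : sk_el d X k r) : sk_el d Y k r :=
  {| ss := ss a; sf := sf a; sdeg := sdeg a; sx := phi _ (sx a) |}.

Lemma sk_map_cls {k r} a :
  sk_map d phi k r (cls (sk_rel d X k r) a) = cls (sk_rel d Y k r) (sk_el_map a).
Proof.
  refine (cls_map_rep_cls _ _ sk_el_map _ a). intros a1 a2 [w [E1 E2]]. apply rst_step.
  exists w. simpl. rewrite E2. auto.
Qed.

Lemma sk_map_nat k : is_nat (sk_map d phi k).
Proof.
  intros r r' h q. destruct (cls_surj _ q) as [a ->].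
  rewrite (sk_act_cls X), !sk_map_cls, (sk_act_cls Y). reflexivity.
Qed.

Lemma sk_counit_map {k r} q : sk_counit d Y k r (sk_map d phi k r q) = phi r (sk_counit d X k r q).
Proof.
  destruct (cls_surj _ q) as [a ->].
  rewrite sk_map_cls, (sk_counit_cls Y HY), (sk_counit_cls X HX). symmetry. apply Hphi.
Qed.

Lemma sk_map_widen {k r} q :
  sk_map d phi (S k) r (sk_widen d X k r q) = sk_widen d Y k r (sk_map d phi k r q).
Proof.
  destruct (cls_surj _ q) as [a ->].
  rewrite (sk_widen_cls X), !sk_map_cls, (sk_widen_cls Y). reflexivity.
Qed.

Definition relsk_el_act {k r r'} (h : Hom C r' r) (p : pobj X r + pobj (sk_lt d Y k) r) :
  pobj X r' + pobj (sk_lt d Y k) r' :=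
  match p with inl x => inl (pact X h x) | inr l => inr (pact (sk_lt d Y k) h l) end.

Lemma relsk_act_cls {k r r'} (h : Hom C r' r) p :
  pact (relsk d phi k) h (cls (relsk_rel d phi k r) p) = cls (relsk_rel d phi k r') (relsk_el_act h p).
Proof.
  refine (cls_map_rep_cls _ _ (relsk_el_act h) _ p). intros a b [l [-> ->]]. apply rst_step.
  exists (pact (sk_lt d X k) h l).
  unfold relsk_el_act. rewrite (sk_counit_nat X HX), sk_map_nat. auto.
Qed.

Lemma relsk_psh k : is_psh (relsk d phi k).
Proof.
  split.
  - intros r q. destruct (cls_surj _ q) as [p ->]. rewrite relsk_act_cls.
    destruct p as [x|l]; cbn [relsk_el_act];
      [rewrite (psh_id HX) | rewrite (psh_id (sk_lt_psh Y k))]; reflexivity.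
  - intros r s t f g q. destruct (cls_surj _ q) as [p ->]. rewrite !relsk_act_cls.
    destruct p as [x|l]; cbn [relsk_el_act];
      [rewrite (psh_comp HX) | rewrite (psh_comp (sk_lt_psh Y k))]; reflexivity.
Qed.

Definition relsk_el_incl {k r} (p : pobj X r + pobj (sk_lt d Y k) r) :
  pobj X r + pobj (sk_lt d Y (S k)) r :=
  match p with inl x => inl x | inr l => inr (sk_widen d Y k r l) end.

Lemma relsk_incl_cls {k r} p :
  relsk_incl d phi k r (cls (relsk_rel d phi k r) p) = cls (relsk_rel d phi (S k) r) (relsk_el_incl p).
Proof.
  refine (cls_map_rep_cls _ _ relsk_el_incl _ p). intros a b [l [-> ->]]. apply rst_step.
  exists (sk_widen d X k r l). simpl. rewrite (sk_counit_widen X HX), sk_map_widen. auto.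
Qed.

Lemma relsk_incl_nat k : is_nat (relsk_incl d phi k).
Proof.
  intros r s h q. destruct (cls_surj _ q) as [p ->].
  rewrite relsk_act_cls, !relsk_incl_cls, relsk_act_cls.
  destruct p as [x|l]; cbn [relsk_el_act relsk_el_incl]; [|rewrite (sk_widen_nat Y)]; reflexivity.
Qed.

(* [sk_(k-1)(phi) -> Y]; for [phi] injective it identifies [sk_(k-1)(phi)] with the
   subpresheaf of [Y] generated by [phi(X)] and the elements of degree [< k]. *)
Definition relsk_el_val {k r} (p : pobj X r + pobj (sk_lt d Y k) r) : pobj Y r :=
  match p with inl x => phi r x | inr l => sk_counit d Y k r l end.

Definition relsk_counit k : PMap (relsk d phi k) Y := fun r q => relsk_el_val (rep q).

Lemma relsk_counit_cls {k r} p : relsk_counit k r (cls (relsk_rel d phi k r) p) = relsk_el_val p.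
Proof.
  apply (invariant_rep_cls _ relsk_el_val). intros a b [l [-> ->]]. symmetry. apply sk_counit_map.
Qed.

Lemma relsk_counit_nat k : is_nat (relsk_counit k).
Proof.
  intros r s h q. destruct (cls_surj _ q) as [p ->].
  rewrite relsk_act_cls, !relsk_counit_cls.
  destruct p as [x|l]; [apply Hphi | apply (sk_counit_nat Y HY)].
Qed.

Lemma relsk_counit_incl {k r} q : relsk_counit (S k) r (relsk_incl d phi k r q) = relsk_counit k r q.
Proof.
  destruct (cls_surj _ q) as [p ->]. rewrite relsk_incl_cls, !relsk_counit_cls.
  destruct p as [x|l]; [|apply (sk_counit_widen Y HY)]; reflexivity.
Qed.

Lemma relsk_counit_image {k r} (y : pobj Y r) :
  (exists q, relsk_counit k r q = y) <-> (exists x, phi r x = y) \/ low_degree Y k y.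
Proof.
  split.
  - intros [q <-]. destruct (cls_surj _ q) as [[x|l] ->]; rewrite relsk_counit_cls; cbn [relsk_el_val].
    + left. exists x. auto.
    + right. apply (sk_counit_image Y HY). exists l. auto.
  - intros [[x E]|H].
    + exists (cls (relsk_rel d phi k r) (inl x)). rewrite relsk_counit_cls. exact E.
    + destruct (proj2 (sk_counit_image Y HY y) H) as [l El].
      exists (cls (relsk_rel d phi k r) (inr l)). rewrite relsk_counit_cls. exact El.
Qed.

(* If [phi x] has degree [< k], so has the non-degenerate root of [x]. *)
Lemma relsk_identify (Hi : objectwise_injective phi) {k r} x (l : pobj (sk_lt d Y k) r) :
  phi r x = sk_counit d Y k r l -> clos_refl_sym_trans _ (relsk_rel d phi k r) (inl x) (inr l).
Proof.
  intro E. destruct (proj1 (sk_counit_image Y HY _) (ex_intro _ l eq_refl)) as [t [f [y [Hd Ey]]]].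
  destruct (EZ_exists_deg_le d HEZ Y HY f y) as [t2 [sg [z [Hs [Hz [Hd2 E2]]]]]].
  destruct (EZ_exists d HEZ X HX r x) as [t3 [v [z3 [Hv [Hz3 Ex]]]]].
  assert (E3 : pact Y v (phi t3 z3) = pact Y sg z) by (rewrite <- Hphi, <- Ex, E, Ey; exact E2).
  destruct (EZ_unique d HEZ Y HY v sg _ _ Hv Hs
              (injective_nondegenerate X Y HY phi Hphi Hi z3 Hz3) Hz E3) as [th [Ht _]].
  pose proof (iso_deg_eq d HEZ th Ht).
  assert (Hd3 : d t3 < k) by lia.
  set (l0 := cls (sk_rel d X k r) {| ss := t3; sf := v; sdeg := Hd3; sx := z3 |}).
  assert (El0 : sk_counit d X k r l0 = x) by (unfold l0; rewrite (sk_counit_cls X HX); auto).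
  apply rst_step. exists l0. rewrite El0. split; auto. f_equal.
  apply (sk_counit_inj Y HY). rewrite sk_counit_map, El0. auto.
Qed.

Lemma relsk_counit_inj (Hi : objectwise_injective phi) {k r} (q q' : pobj (relsk d phi k) r) :
  relsk_counit k r q = relsk_counit k r q' -> q = q'.
Proof.
  destruct (cls_surj _ q) as [p ->], (cls_surj _ q') as [p' ->].
  rewrite !relsk_counit_cls. intro E. apply cls_eq.
  destruct p as [x|l], p' as [x'|l']; cbn [relsk_el_val] in E.
  - rewrite (Hi _ _ _ E). apply rst_refl.
  - apply relsk_identify; auto.
  - apply rst_sym, relsk_identify; auto.
  - rewrite (sk_counit_inj Y HY _ _ E). apply rst_refl.
Qed.

Definition relsk_of {k r} (Hk : d r < k) (y : pobj Y r) : pobj (relsk d phi k) r :=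
  cls (relsk_rel d phi k r) (inr (cls (sk_rel d Y k r) (Build_sk_el d Y k r r (idm r) Hk y))).

Lemma relsk_counit_of {k r} (Hk : d r < k) y : relsk_counit k r (relsk_of Hk y) = y.
Proof.
  unfold relsk_of. rewrite relsk_counit_cls. cbn [relsk_el_val].
  rewrite (sk_counit_cls Y HY). apply (psh_id HY).
Qed.

Lemma relsk_act_of {k r} (Hk : d r < k) (g : Hom C r r) y :
  pact (relsk d phi k) g (relsk_of Hk y) = relsk_of Hk (pact Y g y).
Proof.
  unfold relsk_of. rewrite relsk_act_cls. cbn [relsk_el_act].
  rewrite (sk_act_cls Y). do 2 f_equal. apply cls_eq, rst_step. exists g.
  simpl. rewrite comp_id_l, comp_id_r. auto.
Qed.

Lemma relsk_inl {k r} (Hk : d r < k) x :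
  cls (relsk_rel d phi k r) (inl x) = relsk_of Hk (phi r x).
Proof.
  apply cls_eq, rst_step.
  exists (cls (sk_rel d X k r) (Build_sk_el d X k r r (idm r) Hk x)).
  rewrite (sk_counit_cls X HX), sk_map_cls. unfold sk_val. simpl.
  rewrite (psh_id HX). auto.
Qed.

End Skeleta.

Section PresheafPushouts.
Context {C : Cat}.

(* Test presheaves for pushouts: [sieve_psh F u] consists of relations between the maps
   [v -> u] and the elements of [F v], with restriction by precomposition. *)
Definition sieve_psh (F : Ob C -> Type) : Psh C := {|
  pobj u := forall v, Hom C v u -> F v -> Prop;
  pact u u' h P := fun v g b => P v (comp h g) b |}.

Lemma sieve_psh_is_psh (F : Ob C -> Type) : is_psh (sieve_psh F).
Proof.
  split; intros; simpl; apply functional_extensionality_dep; intro v;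
    apply functional_extensionality; intro w; [rewrite comp_id_l | rewrite comp_assoc]; reflexivity.
Qed.

Definition full_sieve (U : Psh C) : PMap U (sieve_psh (fun _ => unit)) :=
  fun u _ v g _ => True.

Lemma full_sieve_nat (U : Psh C) : is_nat (full_sieve U).
Proof. intros r s f x. reflexivity. Qed.

Context {A B E D : Psh C} (i : PMap A B) (j : PMap A E) (h : PMap B D) (k : PMap E D).

Definition in_image {U V : Psh C} (f : PMap U V) {s} (v : pobj V s) : Prop :=
  exists u, f s u = v.

Section Consequences.
Context (HPO : is_psh_pushout i j h k) (Hi : is_nat i).

Lemma psh_pushout_inj (HB : is_psh B) (HE : is_psh E) (Hj : is_nat j) :
  objectwise_injective i -> objectwise_injective k.
Proof.
  intros Hinj r c c' Ekc.
  set (qE := (fun u c => fun v g c1 => c1 = pact E g c) : PMap E (sieve_psh (pobj E))).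
  set (qB := (fun u b => fun v g c1 => exists a, i v a = pact B g b /\ c1 = j v a)
         : PMap B (sieve_psh (pobj E))).
  assert (HqE : is_nat qE).
  { intros r1 s f x. unfold qE. simpl. apply functional_extensionality_dep; intro v.
    apply functional_extensionality; intro g. rewrite (psh_comp HE). reflexivity. }
  assert (HqB : is_nat qB).
  { intros r1 s f x. unfold qB. simpl. apply functional_extensionality_dep; intro v.
    apply functional_extensionality; intro g. rewrite (psh_comp HB). reflexivity. }
  assert (Hcompat : forall r a, qB r (i r a) = qE r (j r a)).
  { intros r1 a. unfold qB, qE. apply functional_extensionality_dep; intro v.
    apply functional_extensionality; intro g. apply functional_extensionality; intro c1.
    rewrite <- Hi, <- Hj. apply propositional_extensionality. split.
    - intros [a' [Ea ->]]. rewrite (Hinj _ _ _ Ea). reflexivity.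
    - intros ->. eauto. }
  destruct (proj2 HPO _ qB qE (sieve_psh_is_psh _) HqB HqE Hcompat) as [t [_ [_ [Htk _]]]].
  pose proof (f_equal (fun e => t r e r (idm r) c) Ekc) as Ec. simpl in Ec.
  rewrite !Htk in Ec. unfold qE in Ec. rewrite !(psh_id HE) in Ec.
  rewrite <- Ec. reflexivity.
Qed.

Lemma psh_pushout_jointly_surj (HD : is_psh D) (Hh : is_nat h) (Hk : is_nat k) s (e : pobj D s) :
  in_image h e \/ in_image k e.
Proof.
  set (Z := sieve_psh (fun _ => unit)).
  destruct (proj2 HPO Z (full_sieve B) (full_sieve E) (sieve_psh_is_psh _)
              (full_sieve_nat B) (full_sieve_nat E) (fun _ _ => eq_refl)) as [t [_ [_ [_ Huniq]]]].
  set (covered := (fun u e => fun v g _ => in_image h (pact D g e) \/ in_image k (pact D g e))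
         : PMap D Z).
  assert (Hcov : is_nat covered).
  { intros r1 s1 f x. unfold covered. simpl. apply functional_extensionality_dep; intro v.
    apply functional_extensionality; intro g. rewrite (psh_comp HD). reflexivity. }
  assert (Ecov : covered s e = full_sieve D s e).
  { rewrite (Huniq covered Hcov), (Huniq (full_sieve D) (full_sieve_nat D)); auto;
      intros r1 x; unfold covered, full_sieve; apply functional_extensionality_dep; intro v;
      apply functional_extensionality; intro g; apply functional_extensionality; intros [];
      apply propositional_extensionality; split; auto; intros _;
      [left; exists (pact B g x); apply Hh | right; exists (pact E g x); apply Hk]. }
  pose proof (f_equal (fun P => P s (idm s) tt) Ecov) as Hcovered.
  unfold covered, full_sieve in Hcovered. rewrite (psh_id HD) in Hcovered.
  rewrite Hcovered. exact I.
Qed.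

Lemma psh_pushout_inj_off_image (HB : is_psh B) s (b b' : pobj B s) :
  ~ in_image i b -> h s b = h s b' -> b = b'.
Proof.
  intros Hb Ehb.
  set (qB := (fun u b => fun v g b1 => b1 = pact B g b /\ ~ in_image i b1)
         : PMap B (sieve_psh (pobj B))).
  set (qE := (fun u _ => fun v g b1 => False) : PMap E (sieve_psh (pobj B))).
  assert (HqB : is_nat qB).
  { intros r1 s1 f x. unfold qB. simpl. apply functional_extensionality_dep; intro v.
    apply functional_extensionality; intro g. rewrite (psh_comp HB). reflexivity. }
  assert (Hcompat : forall r a, qB r (i r a) = qE r (j r a)).
  { intros r1 a. unfold qB, qE. apply functional_extensionality_dep; intro v.
    apply functional_extensionality; intro g. apply functional_extensionality; intro b1.
    apply propositional_extensionality. split; [|intros []].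
    intros [-> Hn]. apply Hn. exists (pact A g a). apply Hi. }
  destruct (proj2 HPO _ qB qE (sieve_psh_is_psh _) HqB (fun _ _ _ _ => eq_refl) Hcompat)
    as [t [_ [Hth _]]].
  pose proof (f_equal (fun e => t s e s (idm s) b) Ehb) as Eb. simpl in Eb.
  rewrite !Hth in Eb. unfold qB in Eb. rewrite !(psh_id HB) in Eb.
  assert (Hself : b = b /\ ~ in_image i b) by auto.
  rewrite Eb in Hself. apply proj1 in Hself. exact Hself.
Qed.
End Consequences.

Lemma psh_pushout_of_cells (Hh : is_nat h) (Hk : is_nat k) :
  (forall r a, h r (i r a) = k r (j r a)) ->
  objectwise_injective k ->
  (forall s b b', ~ in_image i b -> ~ in_image i b' -> h s b = h s b' -> b = b') ->
  (forall s b c, ~ in_image i b -> h s b <> k s c) ->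
  (forall s (e : pobj D s), in_image k e \/ exists b, ~ in_image i b /\ h s b = e) ->
  is_psh_pushout i j h k.
Proof.
  intros Hsq Hkinj Hhinj Hdisj Hcover. split; [exact Hsq|].
  intros Z p q HZ Hp Hq Hpq.
  set (glued := fun s (e : pobj D s) (z : pobj Z s) =>
    (exists c, k s c = e /\ z = q s c) \/ (exists b, ~ in_image i b /\ h s b = e /\ z = p s b)).
  assert (glued_h : forall s b, glued s (h s b) (p s b)).
  { intros s b. destruct (classic (in_image i b)) as [[a <-]|Hb].
    - left. exists (j s a). rewrite Hsq, Hpq. auto.
    - right. exists b. auto. }
  assert (glued_fun : forall s e z z', glued s e z -> glued s e z' -> z = z').
  { intros s e z z' [[c [Ec ->]]|[b [Hb [Eb ->]]]] [[c' [Ec' ->]]|[b' [Hb' [Eb' ->]]]].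
    - rewrite (Hkinj _ _ _ (eq_trans Ec (eq_sym Ec'))). reflexivity.
    - exfalso. exact (Hdisj s b' c Hb' (eq_trans Eb' (eq_sym Ec))).
    - exfalso. exact (Hdisj s b c' Hb (eq_trans Eb (eq_sym Ec'))).
    - rewrite (Hhinj s b b' Hb Hb' (eq_trans Eb (eq_sym Eb'))). reflexivity. }
  assert (glued_total : forall s e, exists z, glued s e z).
  { intros s e. destruct (Hcover s e) as [[c <-]|[b [_ <-]]]; eexists; [left; eauto | apply glued_h]. }
  set (t := (fun s e => proj1_sig (constructive_indefinite_description _ (glued_total s e)))
         : PMap D Z).
  assert (Ht : forall s e, glued s e (t s e)).
  { intros s e. unfold t. destruct (constructive_indefinite_description _ _). assumption. }
  assert (th : forall s b, t s (h s b) = p s b) by (intros; apply (glued_fun _ (h s b)); auto).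
  assert (tk : forall s c, t s (k s c) = q s c)
    by (intros; apply (glued_fun _ (k s c)); [|left]; eauto).
  exists t. split; [|split; [exact th | split; [exact tk|]]].
  - intros r s f e. destruct (Ht s e) as [[c [<- ->]]|[b [_ [<- ->]]]].
    + rewrite <- Hk, tk. apply Hq.
    + rewrite <- Hh, th. apply Hp.
  - intros t' _ Ht'h Ht'k r e. destruct (Ht r e) as [[c [<- ->]]|[b [_ [<- ->]]]]; auto.
Qed.
End PresheafPushouts.

Section Boundary.
Context {C : Cat}.

Lemma split_epi_not_boundary {r s} (f : Hom C s r) : is_split_epi f -> ~ bd_pred f.
Proof.
  intros [sc Hs] [t [m [g [Hm [Hi E]]]]]. apply Hi. apply split_epi_mono_iso; auto.
  exists (comp g sc). rewrite comp_assoc, <- E. exact Hs.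
Qed.

Lemma not_boundary_split_epi (d : Ob C -> nat) (HEZ : is_EZ C d) {r s} (f : Hom C s r) :
  ~ bd_pred f -> is_split_epi f.
Proof.
  intro H. destruct (EZ_factor d HEZ f) as [t [e [m [He [Hm ->]]]]].
  destruct (classic (is_iso m)) as [Im|Im].
  - apply split_epi_comp; auto. apply iso_is_split_epi; auto.
  - exfalso. apply H. exists t, m, e. auto.
Qed.

Lemma bdry_incl_image {I : Type} (rho : I -> Ob C) {s} (x : pobj (copr (fun i => yon (rho i))) s) :
  in_image (bdry_incl rho) x <-> bd_pred (projT2 x).
Proof.
  split.
  - intros [[i [f Hf]] <-]. exact Hf.
  - destruct x as [i f]. intro Hf. exists (existT _ i (exist _ f Hf)). reflexivity.
Qed.
End Boundary.

Definition cell_attachment {C : Cat} (d : Ob C -> nat) {X Y : Psh C} (phi : PMap X Y) (n : nat) :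
  Prop :=
  exists (I : Type) (rho : I -> Ob C)
    (alpha : PMap (copr (fun i => bdry (rho i))) (relsk d phi n))
    (beta : PMap (copr (fun i => yon (rho i))) (relsk d phi (S n))),
    (forall i, d (rho i) = n) /\ is_nat alpha /\ is_nat beta /\
    is_psh_pushout (bdry_incl rho) alpha beta (relsk_incl d phi n).

Section CellAttachment.
Context {C : Cat} (d : Ob C -> nat) (HEZ : is_EZ C d)
  (X Y : Psh C) (HX : is_psh X) (HY : is_psh Y) (phi : PMap X Y) (Hphi : is_nat phi)
  (Hinj : objectwise_injective phi) (Hiso : trivial_isotropy phi) (n : nat).

Local Notation counit := (relsk_counit d X Y phi).
Local Notation counit_cls := (relsk_counit_cls d X Y HX HY phi Hphi).
Local Notation counit_inj := (relsk_counit_inj d HEZ X Y HX HY phi Hphi Hinj).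

Definition is_new_cell (r : Ob C) (y : pobj Y r) : Prop :=
  d r = n /\ nondegenerate Y r y /\ ~ (exists x, phi r x = y).

Definition new_cell : Type := { r : Ob C & { y : pobj Y r | is_new_cell r y } }.

Definition cell_iso (a b : new_cell) : Prop :=
  exists g : Hom C (projT1 a) (projT1 b),
    is_iso g /\ proj1_sig (projT2 a) = pact Y g (proj1_sig (projT2 b)).

(* One cell for each [Aut]-orbit of new non-degenerate elements of degree [n]. *)
Definition cell_index : Type := quot cell_iso.
Definition cell_obj (i : cell_index) : Ob C := projT1 (rep i).
Definition cell_elt (i : cell_index) : pobj Y (cell_obj i) := proj1_sig (projT2 (rep i)).

Lemma cell_elt_new i : is_new_cell (cell_obj i) (cell_elt i).
Proof. exact (proj2_sig (projT2 (rep i))). Qed.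

Lemma cell_obj_deg i : d (cell_obj i) = n.
Proof. apply cell_elt_new. Qed.

Lemma cell_obj_lt i : d (cell_obj i) < S n.
Proof. rewrite cell_obj_deg. lia. Qed.

Lemma cell_iso_of_rst a b : clos_refl_sym_trans _ cell_iso a b -> cell_iso a b.
Proof.
  apply rst_equiv.
  - intro a1. exists (idm _). split; [apply id_is_iso | symmetry; apply (psh_id HY)].
  - intros a1 b1 [g [[g' [G1 G2]] E]]. exists g'. split; [exists g; auto|].
    rewrite E, <- (psh_comp HY), G2, (psh_id HY). reflexivity.
  - intros a1 b1 c1 [g [Ig E1]] [h [Ih E2]]. exists (comp h g). split; [apply iso_comp; auto|].
    rewrite E1, E2, (psh_comp HY). reflexivity.
Qed.

Local Notation cells := (copr (fun i => yon (cell_obj i))).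
Local Notation cell_bdrys := (copr (fun i => bdry (cell_obj i))).

Definition cell_beta : PMap cells (relsk d phi (S n)) :=
  fun s x => cls (relsk_rel d phi (S n) s) (inr (cls (sk_rel d Y (S n) s)
    {| ss := cell_obj (projT1 x); sf := projT2 x;
       sdeg := cell_obj_lt (projT1 x);
       sx := cell_elt (projT1 x) |})).

Lemma counit_cell_beta s x : counit (S n) s (cell_beta s x) = pact Y (projT2 x) (cell_elt (projT1 x)).
Proof. unfold cell_beta. rewrite counit_cls. apply (sk_counit_cls d Y HY). Qed.

Lemma boundary_in_relsk s (x : pobj cell_bdrys s) :
  exists q, counit n s q = pact Y (proj1_sig (projT2 x)) (cell_elt (projT1 x)).
Proof.
  destruct x as [i [f [t [m [g [Hm [Hmi ->]]]]]]]. simpl.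
  apply (relsk_counit_image d X Y HX HY phi Hphi). right.
  exists t, g, (pact Y m (cell_elt i)). split.
  - rewrite <- (cell_obj_deg i). exact (mono_noniso_deg_lt d HEZ m Hm Hmi).
  - apply (psh_comp HY).
Qed.

Definition cell_alpha : PMap cell_bdrys (relsk d phi n) :=
  fun s x => proj1_sig (constructive_indefinite_description _ (boundary_in_relsk s x)).

Lemma counit_cell_alpha s x :
  counit n s (cell_alpha s x) = pact Y (proj1_sig (projT2 x)) (cell_elt (projT1 x)).
Proof. unfold cell_alpha. destruct (constructive_indefinite_description _ _). assumption. Qed.

Lemma cell_alpha_nat : is_nat cell_alpha.
Proof.
  intros r s f x. apply counit_inj.
  rewrite (relsk_counit_nat d X Y HX HY phi Hphi), !counit_cell_alpha. apply (psh_comp HY).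
Qed.

Lemma cell_beta_nat : is_nat cell_beta.
Proof.
  intros r s f x. apply counit_inj.
  rewrite (relsk_counit_nat d X Y HX HY phi Hphi), !counit_cell_beta. apply (psh_comp HY).
Qed.

Lemma cell_square r a : cell_beta r (bdry_incl cell_obj r a) = relsk_incl d phi n r (cell_alpha r a).
Proof.
  apply counit_inj.
  rewrite (relsk_counit_incl d X Y HX HY phi Hphi), counit_cell_beta, counit_cell_alpha.
  reflexivity.
Qed.

Lemma relsk_incl_inj : objectwise_injective (relsk_incl d phi n).
Proof.
  intros r a a' E. apply (f_equal (counit (S n) r)) in E.
  rewrite !(relsk_counit_incl d X Y HX HY phi Hphi) in E. exact (counit_inj _ _ E).
Qed.

(* A non-boundary [f] into a cell is a split epi, so [f^* y] has [y] as its
   non-degenerate root. *)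
Lemma cell_interior_new s i (f : Hom C s (cell_obj i)) : ~ bd_pred f ->
  ~ (exists x, phi s x = pact Y f (cell_elt i)) /\ ~ low_degree d Y n (pact Y f (cell_elt i)).
Proof.
  intro Hb. pose proof (not_boundary_split_epi d HEZ f Hb) as Hf.
  destruct (cell_elt_new i) as [Hd [Hn Hni]]. split.
  - intros [x Ex]. destruct (EZ_exists d HEZ X HX s x) as [t [v [z [Hv [Hz ->]]]]].
    rewrite Hphi in Ex.
    destruct (EZ_unique d HEZ Y HY v f _ _ Hv Hf
                (injective_nondegenerate X Y HY phi Hphi Hinj z Hz) Hn Ex)
      as [th [[th' [T1 T2]] [_ E2]]].
    apply Hni. exists (pact X th' z). rewrite Hphi, E2, <- (psh_comp HY), T2, (psh_id HY). reflexivity.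
  - intros [t [g [x [Ht E]]]].
    pose proof (EZ_deg_le d HEZ Y HY g x f (cell_elt i) Hf Hn (eq_sym E)). lia.
Qed.

Lemma cell_beta_interior_inj s (x x' : pobj cells s) :
  ~ in_image (bdry_incl cell_obj) x -> ~ in_image (bdry_incl cell_obj) x' ->
  cell_beta s x = cell_beta s x' -> x = x'.
Proof.
  rewrite !bdry_incl_image. destruct x as [i f], x' as [i' f']. simpl. intros Hb Hb' E.
  apply (f_equal (counit (S n) s)) in E. rewrite !counit_cell_beta in E. simpl in E.
  destruct (cell_elt_new i) as [_ [Hn Hni]], (cell_elt_new i') as [_ [Hn' _]].
  destruct (EZ_unique d HEZ Y HY f f' _ _ (not_boundary_split_epi d HEZ f Hb)
              (not_boundary_split_epi d HEZ f' Hb') Hn Hn' E) as [th [Ith [-> E2]]].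
  assert (Eii : i = i').
  { rewrite <- (cls_rep _ i), <- (cls_rep _ i'). apply cls_eq, rst_step. exists th. auto. }
  subst i'. replace th with (idm (cell_obj i)) by (symmetry; apply (Hiso _ (cell_elt i)); auto).
  rewrite comp_id_l. reflexivity.
Qed.

Lemma cell_beta_interior_not_incl s (x : pobj cells s) a :
  ~ in_image (bdry_incl cell_obj) x -> cell_beta s x <> relsk_incl d phi n s a.
Proof.
  rewrite bdry_incl_image. intros Hb E. apply (f_equal (counit (S n) s)) in E.
  rewrite (relsk_counit_incl d X Y HX HY phi Hphi), counit_cell_beta in E.
  destruct x as [i f]. destruct (cell_interior_new s i f Hb) as [N1 N2].
  destruct (proj1 (relsk_counit_image d X Y HX HY phi Hphi _) (ex_intro _ a eq_refl)) as [H|H];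
    rewrite <- E in H; auto.
Qed.

(* Elements of [sk_n(phi)] outside [sk_(n-1)(phi)] are [u^* c] with [c] non-degenerate
   of degree exactly [n] and not in [phi(X)], i.e. lie in the interior of a cell. *)
Lemma relsk_succ_cover s (q : pobj (relsk d phi (S n)) s) :
  in_image (relsk_incl d phi n) q \/
  exists x : pobj cells s, ~ in_image (bdry_incl cell_obj) x /\ cell_beta s x = q.
Proof.
  set (y := counit (S n) s q).
  destruct (classic ((exists x, phi s x = y) \/ low_degree d Y n y)) as [H|H].
  - left. destruct (proj2 (relsk_counit_image d X Y HX HY phi Hphi y) H) as [a Ea].
    exists a. apply counit_inj. rewrite (relsk_counit_incl d X Y HX HY phi Hphi). exact Ea.
  - right. destruct (proj1 (relsk_counit_image d X Y HX HY phi Hphi y) (ex_intro _ q eq_refl))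
      as [H1|[t [f0 [x0 [Ht E0]]]]]; [tauto|].
    destruct (EZ_exists_deg_le d HEZ Y HY f0 x0) as [t2 [sg [c [Hs [Hc [Hd2 E2]]]]]].
    rewrite <- E0 in E2.
    assert (Hdn : d t2 = n).
    { destruct (Nat.eq_dec (d t2) n) as [e|e]; auto. exfalso. apply H. right.
      exists t2, sg, c. split; [lia | auto]. }
    assert (Hcell : is_new_cell t2 c).
    { split; auto. split; auto. intros [x Ex]. apply H. left.
      exists (pact X sg x). rewrite Hphi, Ex. auto. }
    set (i := cls cell_iso (existT _ t2 (exist _ c Hcell) : new_cell)).
    destruct (cell_iso_of_rst _ _ (rep_cls cell_iso (existT _ t2 (exist _ c Hcell) : new_cell)))
      as [g [[g' [G1 G2]] Eg]].
    fold i in g, g', G1, G2, Eg. change (cell_elt i = pact Y g c) in Eg.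
    exists (existT _ i (comp g' sg)). rewrite bdry_incl_image. split.
    + apply split_epi_not_boundary, split_epi_comp; auto. apply iso_is_split_epi. exists g; auto.
    + apply counit_inj. rewrite counit_cell_beta. simpl.
      rewrite (psh_comp HY), Eg, <- (psh_comp HY g' g), G2, (psh_id HY). symmetry; exact E2.
Qed.

Theorem cell_attachment_of_trivial_isotropy : cell_attachment d phi n.
Proof.
  exists cell_index, cell_obj, cell_alpha, cell_beta.
  split; [exact cell_obj_deg|]. split; [exact cell_alpha_nat|]. split; [exact cell_beta_nat|].
  apply psh_pushout_of_cells.
  - exact cell_beta_nat.
  - exact (relsk_incl_nat d X Y HX phi Hphi n).
  - exact cell_square.
  - exact relsk_incl_inj.
  - exact cell_beta_interior_inj.
  - exact cell_beta_interior_not_incl.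
  - intros s e. destruct (relsk_succ_cover s e) as [H|H]; auto.
Qed.
End CellAttachment.

Section BoundaryInclusion.
Context {C : Cat} {I : Type} (rho : I -> Ob C).

Lemma copr_is_psh (F : I -> Psh C) : (forall i, is_psh (F i)) -> is_psh (copr F).
Proof.
  intro HF. split.
  - intros r [i x]. simpl. rewrite (psh_id (HF i)). reflexivity.
  - intros r s t f g [i x]. simpl. rewrite (psh_comp (HF i)). reflexivity.
Qed.

Lemma bdry_incl_nat : is_nat (bdry_incl rho).
Proof. intros r s f [i [g Hg]]. reflexivity. Qed.

Lemma bdry_incl_inj : objectwise_injective (bdry_incl rho).
Proof.
  intros s [i [f Hf]] [i' [f' Hf']] E. unfold bdry_incl in E. simpl in E.
  inversion E as [Ei]. subst i'. apply inj_pair2 in E. subst f'.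
  do 2 f_equal. apply proof_irrelevance.
Qed.
End BoundaryInclusion.

Section FromCellAttachment.
Context {C : Cat} (d : Ob C -> nat) (HEZ : is_EZ C d)
  (X Y : Psh C) (HX : is_psh X) (HY : is_psh Y) (phi : PMap X Y) (Hphi : is_nat phi)
  (Hcells : forall n, cell_attachment d phi n).

Lemma relsk_incl_inj_of_cell_attachment n : objectwise_injective (relsk_incl d phi n).
Proof.
  destruct (Hcells n) as [I [rho [alpha [beta [_ [Ha [_ HPO]]]]]]].
  apply (psh_pushout_inj _ _ _ _ HPO (bdry_incl_nat rho)).
  - apply copr_is_psh. intro i. apply yon_is_psh.
  - apply relsk_psh; assumption.
  - exact Ha.
  - apply bdry_incl_inj.
Qed.

(* [X] embeds in every [sk_(k-1)(phi)]: [sk_(-1)(phi) = X] and each attachment is injective. *)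
Lemma relsk_inl_inj k r (x x' : pobj X r) :
  cls (relsk_rel d phi k r) (inl x) = cls (relsk_rel d phi k r) (inl x') -> x = x'.
Proof.
  induction k as [|k IH]; intro E.
  - apply cls_inj in E.
    assert (E2 : (inl x : pobj X r + pobj (sk_lt d Y 0) r) = inl x').
    { apply (rst_invariant (relsk_rel d phi 0 r) (fun p => p)); [|exact E].
      intros a a' [l _]. exfalso. pose proof (sdeg (rep l)). lia. }
    injection E2; auto.
  - apply IH, (relsk_incl_inj_of_cell_attachment k).
    rewrite !(relsk_incl_cls d X Y HX phi Hphi). exact E.
Qed.

Lemma injective_of_cell_attachments : objectwise_injective phi.
Proof.
  intros r x x' E. apply (relsk_inl_inj (S (d r)) r).
  rewrite !(relsk_inl d X Y HX phi Hphi (Nat.lt_succ_diag_r (d r))), E. reflexivity.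
Qed.

Section OneAttachment.
Context (n : nat) (I : Type) (rho : I -> Ob C)
  (alpha : PMap (copr (fun i => bdry (rho i))) (relsk d phi n))
  (beta : PMap (copr (fun i => yon (rho i))) (relsk d phi (S n)))
  (Hdeg : forall i, d (rho i) = n) (Hbeta : is_nat beta)
  (HPO : is_psh_pushout (bdry_incl rho) alpha beta (relsk_incl d phi n)).

Lemma new_nondegenerate_in_cell {r} (Hk : d r < S n) (y : pobj Y r) :
  d r = n -> nondegenerate Y r y -> ~ (exists x, phi r x = y) ->
  exists i (f : Hom C r (rho i)), is_iso f /\ beta r (existT _ i f) = relsk_of d X Y phi Hk y.
Proof.
  intros Hr Hy Hn.
  assert (Hlow : ~ low_degree d Y n y).
  { intros [t [f [x [Ht E]]]]. pose proof (nondegenerate_deg_le d HEZ Y HY y f x Hy E). lia. }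
  destruct (psh_pushout_jointly_surj _ _ _ _ HPO (relsk_psh d X Y HX phi Hphi (S n)) Hbeta
              (relsk_incl_nat d X Y HX phi Hphi n) r (relsk_of d X Y phi Hk y))
    as [[[i f] Ex]|[a Ea]].
  - exists i, f. split; [|exact Ex].
    set (c := relsk_counit d X Y phi (S n) (rho i) (beta (rho i) (existT _ i (idm (rho i))))).
    assert (Ey : y = pact Y f c).
    { rewrite <- (relsk_counit_of d X Y HX HY phi Hphi Hk y), <- Ex.
      replace (existT _ i f) with (pact (copr (fun i => yon (rho i))) f (existT _ i (idm (rho i))))
        by (simpl; rewrite comp_id_l; reflexivity).
      rewrite Hbeta. apply (relsk_counit_nat d X Y HX HY phi Hphi). }
    assert (Hf : ~ bd_pred f).
    { intros [t [m [g [Hm [Hmi ->]]]]]. apply Hlow. exists t, g, (pact Y m c). split.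
      - rewrite <- (Hdeg i). exact (mono_noniso_deg_lt d HEZ m Hm Hmi).
      - rewrite Ey. apply (psh_comp HY). }
    apply (nondegenerate_split_epi_iso Y f c (not_boundary_split_epi d HEZ f Hf)).
    rewrite <- Ey. exact Hy.
  - exfalso. apply (f_equal (relsk_counit d X Y phi (S n) r)) in Ea.
    rewrite (relsk_counit_incl d X Y HX HY phi Hphi), (relsk_counit_of d X Y HX HY phi Hphi) in Ea.
    destruct (proj1 (relsk_counit_image d X Y HX HY phi Hphi y) (ex_intro _ a Ea)); auto.
Qed.
End OneAttachment.

(* A fixed [y] of degree [n] lies in the interior of an [n]-cell, at some [f] with
   [f^* c = y]; then [f] and [f g] have the same image, so [f = f g]. *)
Lemma trivial_isotropy_of_cell_attachments : trivial_isotropy phi.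
Proof.
  intros r y Hy Hn g Hg Eg.
  destruct (Hcells (d r)) as [I [rho [alpha [beta [Hd [_ [Hb HPO]]]]]]].
  set (Hk := Nat.lt_succ_diag_r (d r)).
  destruct (new_nondegenerate_in_cell _ I rho alpha beta Hd Hb HPO Hk y eq_refl Hy Hn)
    as [i [f [If Ef]]].
  assert (Efg : beta r (existT _ i f) = beta r (existT _ i (comp f g))).
  { change (existT _ i (comp f g)) with (pact (copr (fun i => yon (rho i))) g (existT _ i f)).
    rewrite Hb, Ef, (relsk_act_of d X Y HX phi Hphi), Eg. reflexivity. }
  apply (psh_pushout_inj_off_image _ _ _ _ HPO (bdry_incl_nat rho)
           (copr_is_psh _ (fun i => yon_is_psh (rho i)))) in Efg;
    [|rewrite bdry_incl_image; exact (split_epi_not_boundary f (iso_is_split_epi f If))].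
  apply inj_pair2 in Efg. apply (iso_is_mono f If). rewrite comp_id_r. symmetry. exact Efg.
Qed.
End FromCellAttachment.

Theorem proposition7p2 (C : Cat) (d : Ob C -> nat) (HEZ : is_EZ C d)
  (X Y : Psh C) (HX : is_psh X) (HY : is_psh Y)
  (phi : PMap X Y) (Hphi : is_nat phi) :
  let cond_i :=
    forall r : Ob C, free_aut_ext Y r (rel_latch_map phi r) in
  let cond_ii :=
    is_psh_mono phi /\
    forall (r : Ob C) (y : pobj Y r), nondegenerate Y r y ->
      ~ (exists x, phi r x = y) ->
      forall g : Hom C r r, is_iso g -> pact Y g y = y -> g = idm r in
  let cond_iii :=
    forall n : nat,
      exists (I : Type) (rho : I -> Ob C)
        (alpha : PMap (copr (fun i => bdry (rho i))) (relsk d phi n))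
        (beta : PMap (copr (fun i => yon (rho i))) (relsk d phi (S n))),
        (forall i, d (rho i) = n) /\ is_nat alpha /\ is_nat beta /\
        is_psh_pushout (bdry_incl rho) alpha beta (relsk_incl d phi n) in
  (cond_i <-> cond_ii) /\ (cond_ii <-> cond_iii).
Proof.
  intros cond_i cond_ii cond_iii.
  change cond_ii with (is_psh_mono phi /\ trivial_isotropy phi).
  change cond_iii with (forall n, cell_attachment d phi n).
  subst cond_i cond_ii cond_iii.
  split; split.
  - intro Hfree. split.
    + apply injective_psh_mono, (injective_of_free_ext d HEZ X Y HX HY phi Hphi Hfree).
    + exact (trivial_isotropy_of_free_ext X Y phi Hfree).
  - intros [Hm Hiso]. apply (free_ext_of_trivial_isotropy d HEZ X Y HX HY phi Hphi); auto.
    exact (psh_mono_injective HX phi Hphi Hm).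
  - intros [Hm Hiso] n.
    exact (cell_attachment_of_trivial_isotropy d HEZ X Y HX HY phi Hphi
             (psh_mono_injective HX phi Hphi Hm) Hiso n).
  - intro Hcells. split.
    + apply injective_psh_mono, (injective_of_cell_attachments d X Y HX phi Hphi Hcells).
    + exact (trivial_isotropy_of_cell_attachments d HEZ X Y HX HY phi Hphi Hcells).
Qed.
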